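(* Let $S_i>0$, and let $u_{\min}<0<u_{\max}$ and $0<v_{\min}\le v_{\max}$ be constants. Let $v_i^0$ satisfy $v_{\min}\le v_i^0\le v_{\max}$. For $t_i^f>0$ define $$b_i=\frac{3(S_i-v_i^0t_i^f)}{2(t_i^f)^2},\qquad a_i=-\frac{b_i}{3t_i^f},$$ and the trajectory $p_i(t)=a_it^3+b_it^2+v_i^0t$, $v_i(t)=3a_it^2+2b_it+v_i^0$, $u_i(t)=6a_it+2b_i$ for $t\in[0,t_i^f]$ (so that $p_i(0)=0$, $v_i(0)=v_i^0$, $p_i(t_i^f)=S_i$, $u_i(t_i^f)=0$). Call $t_i^f$ feasible if $u_{\min}\le u_i(t)\le u_{\max}$ and $v_{\min}\le v_i(t)\le v_{\max}$ for all $t\in[0,t_i^f]$. Define $$t_{i,v_{\min}}^f=\frac{3S_i}{v_i^0+2v_{\min}},\qquad t_{i,u_{\min}}^f=\frac{\sqrt{9(v_i^0)^2+12S_iu_{\min}}-3v_i^0}{2u_{\min}}\ \ (\text{when } 9(v_i^0)^2+12S_iu_{\min}\ge 0),$$ and $$t_{i,\max}^f=\begin{cases} t_{i,v_{\min}}^f, & \text{if } 9(v_i^0)^2+12S_iu_{\min}<0,\\ \max\{t_{i,u_{\min}}^f,\,t_{i,v_{\min}}^f\}, & \text{otherwise.}\end{cases}$$ Then $t_{i,\max}^f$ is an upper bound on the exit time imposed by the speed and control constraints: every feasible $t_i^f$ satisfies $t_i^f\le t_{i,\max}^f$.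
   Context: This is the unconstrained energy-optimal (cubic-position) trajectory for a double-integrator vehicle $\dot p_i=v_i$, $\dot v_i=u_i$ traveling a distance $S_i$ starting at time $0$ from position $0$ with speed $v_i^0$, with exit time $t_i^f$ and terminal condition $u_i(t_i^f)=0$. The speed and control constraints are $u_{\min}\le u_i(t)\le u_{\max}$ and $0<v_{\min}\le v_i(t)\le v_{\max}$. *)

From Stdlib Require Import Reals.
Open Scope R_scope.

(* Coefficients of the unconstrained energy-optimal cubic trajectory. *)
Definition b_coef (S v0 tf : R) : R := 3 * (S - v0 * tf) / (2 * tf ^ 2).
Definition a_coef (S v0 tf : R) : R := - b_coef S v0 tf / (3 * tf).

Definition pos_traj (S v0 tf t : R) : R :=
  a_coef S v0 tf * t ^ 3 + b_coef S v0 tf * t ^ 2 + v0 * t.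
Definition vel_traj (S v0 tf t : R) : R :=
  3 * a_coef S v0 tf * t ^ 2 + 2 * b_coef S v0 tf * t + v0.
Definition ctrl_traj (S v0 tf t : R) : R :=
  6 * a_coef S v0 tf * t + 2 * b_coef S v0 tf.

Definition feasible (S v0 umin umax vmin vmax tf : R) : Prop :=
  forall t, 0 <= t <= tf ->
    umin <= ctrl_traj S v0 tf t <= umax /\
    vmin <= vel_traj S v0 tf t <= vmax.

Definition t_vmin (S v0 vmin : R) : R := 3 * S / (v0 + 2 * vmin).
Definition disc_umin (S v0 umin : R) : R := 9 * v0 ^ 2 + 12 * S * umin.
Definition t_umin (S v0 umin : R) : R :=
  (sqrt (disc_umin S v0 umin) - 3 * v0) / (2 * umin).

Definition t_max (S v0 umin vmin : R) : R :=
  if Rlt_dec (disc_umin S v0 umin) 0 then t_vmin S v0 vmin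
  else Rmax (t_umin S v0 umin) (t_vmin S v0 vmin).

(* The cubic reaches the exit time with speed v(tf) = (3 S - v0 tf) / (2 tf),
   so the speed constraint v(tf) >= vmin alone already gives
   tf <= 3 S / (v0 + 2 vmin) = t_vmin; and t_max is never below t_vmin. *)

From Stdlib Require Import Reals Lra.
Open Scope R_scope.

Lemma vel_traj_exit (S v0 tf : R) :
  tf <> 0 -> vel_traj S v0 tf tf = (3 * S - v0 * tf) / (2 * tf).
Proof.
  intros Htf. unfold vel_traj, a_coef, b_coef. field. exact Htf.
Qed.

Lemma le_t_vmin (S v0 vmin tf : R) :
  0 < tf -> 0 < v0 + 2 * vmin ->
  vmin <= vel_traj S v0 tf tf -> tf <= t_vmin S v0 vmin.
Proof.
  intros Htf Hden Hv.
  rewrite vel_traj_exit in Hv by lra.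
  apply Rmult_le_compat_r with (r := 2 * tf) in Hv; [|lra].
  replace ((3 * S - v0 * tf) / (2 * tf) * (2 * tf)) with (3 * S - v0 * tf)
    in Hv by (field; lra).
  unfold t_vmin. apply Rmult_le_reg_r with (v0 + 2 * vmin); [exact Hden|].
  replace (3 * S / (v0 + 2 * vmin) * (v0 + 2 * vmin)) with (3 * S)
    by (field; lra).
  lra.
Qed.

Lemma t_vmin_le_t_max (S v0 umin vmin : R) :
  t_vmin S v0 vmin <= t_max S v0 umin vmin.
Proof.
  unfold t_max. destruct (Rlt_dec _ _).
  - apply Rle_refl.
  - apply Rmax_r.
Qed.

Theorem proposition2 (S umin umax vmin vmax v0 : R) :
  0 < S ->
  umin < 0 -> 0 < umax ->
  0 < vmin -> vmin <= vmax ->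
  vmin <= v0 <= vmax ->
  forall tf : R, 0 < tf ->
    feasible S v0 umin umax vmin vmax tf ->
    tf <= t_max S v0 umin vmin.
Proof.
  intros _ _ _ Hvmin _ Hv0 tf Htf Hfeas.
  destruct (Hfeas tf) as [_ [Hexit _]]; [lra|].
  apply Rle_trans with (t_vmin S v0 vmin).
  - apply le_t_vmin; [exact Htf | lra | exact Hexit].
  - apply t_vmin_le_t_max.
Qed.
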